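(* Let $e\ge 3$, let $y\in[1,e-1]$ be rational with denominator $z>1$ (in lowest terms). Suppose $\lambda$ and $\mu$ are partitions lying in the same $(ez,yz)$-ladder class. Then $\lambda$ and $\mu$ have the same number of $y$-bad hooks.
   Context: Partitions are identified with Young diagrams $\{(r,c)\in\mathbb N^2: c\le\lambda_r\}$ (rows counted downwards, columns to the right). The hook of $\lambda$ at a node $(r,c)$ consists of all nodes of $\lambda$ of the form $(r,c')$ with $c'\ge c$ or $(r',c)$ with $r'\ge r$; its length is $\lambda_r-c+\lambda'_c-r+1$ and its arm length is $\lambda_r-c$. For integers $1\le y'<e'$, the $(e',y')$-ladder through $(r,c)\in\mathbb Z^2$ is $\{(r+k(y'-e'),\,c+ky'):k\in\mathbb Z\}$; these ladders partition $\mathbb Z^2$. Two partitions $\lambda,\mu$ are $(e',y')$-equivalent if $|\mathcal L\cap\lambda|=|\mathcal L\cap\mu|$ for every $(e',y')$-ladder $\mathcal L$; the equivalence classes are called $(e',y')$-ladder classes. A hook is $y$-bad if it has length $te$ and arm length $\lfloor yt\rfloor$ for some positive integer $t$ not divisible by $z$. *)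

From mathcomp Require Import all_boot all_order all_algebra.
Set Implicit Arguments. Unset Strict Implicit. Unset Printing Implicit Defensive.
Import Order.TTheory GRing.Theory Num.Theory.

Definition is_partition (s : seq nat) : bool :=
  sorted geq s && all (fun x => 0 < x) s.

(* lambda_r, rows numbered from 1 *)
Definition part (s : seq nat) (r : nat) : nat := nth 0 s r.-1.

Definition conj_part (s : seq nat) (c : nat) : nat := count (fun x => c <= x) s.

Definition nodes (s : seq nat) : seq (nat * nat) :=
  [seq (i.+1, j.+1) | i <- iota 0 (size s), j <- iota 0 (nth 0 s i)].

Definition hook_length (s : seq nat) (rc : nat * nat) : nat :=
  part s rc.1 - rc.2 + conj_part s rc.2 - rc.1 + 1.
Definition arm_length (s : seq nat) (rc : nat * nat) : nat :=
  part s rc.1 - rc.2.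

(* (e',y')-ladder through (r,c) : {(r + k(y'-e'), c + k y') : k in Z}.
   Since y' >= 1, (r',c') lies on it iff k := (c'-c)/y' is an integer with
   r' - r = k (y' - e'). *)
Definition in_ladder (e' y' : int) (rc : int * int) (x : int * int) : bool :=
  ((y' %| x.2 - rc.2)%Z && (x.1 - rc.1 == ((x.2 - rc.2) %/ y')%Z * (y' - e')))%R.

Definition ladder_count (e' y' : int) (rc : int * int) (s : seq nat) : nat :=
  count (fun n : nat * nat => in_ladder e' y' rc (Posz n.1, Posz n.2)) (nodes s).

Definition ladder_equiv (e' y' : int) (s1 s2 : seq nat) : Prop :=
  forall rc : int * int, ladder_count e' y' rc s1 = ladder_count e' y' rc s2.

(* A hook of length h and arm length a is y-bad (y rational with denominator z)
   iff h = t e and a = floor (y t) for some positive integer t not divisible by z.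
   Such a t is necessarily h / e. *)
Definition y_bad (e : nat) (y : rat) (h a : nat) : bool :=
  let t := h %/ e in
  [&& e %| h, 0 < t, ~~ (denq y %| Posz t)%Z &
      (Posz a == Num.floor (y * t%:R))%R].

Definition num_bad_hooks (e : nat) (y : rat) (s : seq nat) : nat :=
  count (fun n => y_bad e y (hook_length s n) (arm_length s n)) (nodes s).

From mathcomp Require Import all_boot all_order all_algebra zify ring.
Import Order.TTheory GRing.Theory Num.Theory.

(* For g : Z -> Z -> Z let  mixed_diff g  be its mixed second
   difference, and define the pair energy of a partition lam
       pair_energy g lam = sum over pairs of nodes n, m of  mixed_diff g (m - n).
   (1) Telescoping along the columns and then along the rows of lam expresses
       pair_energy g lam through boundary terms; when g vanishes outside the
       quadrant {x >= 0, y < 0}, what survives is the sum of g (leg, -arm)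
       over the hooks of lam (pair_energy_boundary, column_boundary_right).
   (2) A sum over the nodes of a function invariant under the ladder step
       (y' - e', y') is a combination of ladder counts; applying this twice,
       pair_energy g lam is an invariant of the (e',y')-ladder class of lam
       whenever g is ladder invariant (pair_energy_ladder_equiv).
   (3) With y = a/z in lowest terms, the indicator bad_cell of "(x, y) is the
       (leg, -arm) pair of a y-bad hook of any, possibly negative, length" is
       invariant under the (ez, a)-ladder step, and it is the sum of its
       restriction to positive lengths and of the reflection of that restriction
       under (x, y) |-> (-x-1, -y+1), which does not change pair energies.
       By (1) its pair energy is twice the number of y-bad hooks.
   The theorem follows from (2) and (3); the hypotheses e >= 3 and z > 1 are
   only used through e > 0 (for z = 1 there are no y-bad hooks at all). *)

Local Open Scope ring_scope.

Lemma sum_nodes (F : nat -> nat -> int) (s : seq nat) :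
  \sum_(n <- nodes s) F n.1 n.2 =
  \sum_(i < size s) \sum_(j < nth 0%N s i) F i.+1 j.+1.
Proof.
rewrite /nodes big_allpairs_dep /=.
have iotaE n : iota 0 n = index_iota 0 n by rewrite /index_iota subn0.
rewrite iotaE big_mkord; apply: eq_bigr => i _.
by rewrite iotaE big_mkord.
Qed.

Lemma col_lt_conj (s : seq nat) (i j : nat) : sorted geq s ->
  (j < nth 0 s i)%N = (i < conj_part s j.+1)%N.
Proof.
rewrite /conj_part.
elim: s i => [|x s IH] i /= srt; first by rewrite nth_nil ltn0.
have srt' : sorted geq s := path_sorted srt.
have tail_small : (x <= j)%N -> count (fun w => j < w)%N s = 0%N.
  move=> xj; apply/eqP; rewrite -leqn0 leqNgt -has_count; apply/hasPn => w ws.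
  have geq_trans : transitive geq by move=> b a c h1 h2; exact: leq_trans h2 h1.
  have /allP/(_ w ws) wx := order_path_min geq_trans srt.
  by rewrite -leqNgt (leq_trans wx xj).
case: i => [|i] /=; first by case: (ltnP j x) => xj //=; rewrite tail_small.
rewrite IH //; case: (ltnP j x) => xj /=; first by rewrite add1n.
by rewrite add0n tail_small.
Qed.

Lemma nth_le_sumn (s : seq nat) (i : nat) : (nth 0 s i <= sumn s)%N.
Proof.
elim: s i => [|x s IH] [|i] //=; first exact: leq_addr.
exact: leq_trans (IH i) (leq_addl _ _).
Qed.

Lemma sum_rows_by_columns (F : nat -> nat -> int) (s : seq nat) : sorted geq s ->
  \sum_(i < size s) \sum_(j < nth 0%N s i) F i j =
  \sum_(j < sumn s) \sum_(i < conj_part s j.+1) F i j.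
Proof.
move=> srt.
transitivity (\sum_(i < size s) \sum_(j < sumn s)
                if (j < nth 0%N s i)%N then F i j else 0).
  apply: eq_bigr => i _.
  by rewrite (big_ord_widen _ (F i) (nth_le_sumn s i)) big_mkcond.
rewrite exchange_big; apply: eq_bigr => j _.
rewrite (big_ord_widen _ (F^~ j) (count_size _ s)) [RHS]big_mkcond.
by apply: eq_bigr => i _; rewrite col_lt_conj.
Qed.

Definition mixed_diff (g : int -> int -> int) (x y : int) : int :=
  g x y - g x (y + 1) - g (x - 1) y + g (x - 1) (y + 1).

Definition pair_energy (g : int -> int -> int) (s : seq nat) : int :=
  \sum_(n <- nodes s) \sum_(m <- nodes s)
     mixed_diff g (m.1%:Z - n.1%:Z) (m.2%:Z - n.2%:Z).

(* Boundary term left after telescoping every column of s, seen from the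
   point (p1, p2): the values of g at the bottom and top of each column. *)
Definition column_boundary (g : int -> int -> int) (s : seq nat) (p1 p2 : int) :=
  \sum_(j < sumn s) (g ((conj_part s j.+1)%:Z - p1) (j.+1%:Z - p2)
                     - g (- p1) (j.+1%:Z - p2)).

Lemma sum_nodes_vertical_diff (g : int -> int -> int) (s : seq nat) (p1 p2 : int) :
  sorted geq s ->
  \sum_(n <- nodes s) (g (n.1%:Z - p1) (n.2%:Z - p2) - g (n.1%:Z - p1 - 1) (n.2%:Z - p2))
  = column_boundary g s p1 p2.
Proof.
move=> srt.
rewrite (sum_nodes (fun a b => g (a%:Z - p1) (b%:Z - p2) - g (a%:Z - p1 - 1) (b%:Z - p2))).
rewrite (sum_rows_by_columns (fun a b =>
  g (a.+1%:Z - p1) (b.+1%:Z - p2) - g (a.+1%:Z - p1 - 1) (b.+1%:Z - p2))) //.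
apply: eq_bigr => j _.
have := telescope_sumr (fun i : nat => g (i%:Z - p1) (j.+1%:Z - p2))
                       (leq0n (conj_part s j.+1)).
rewrite big_mkord sub0r => <-; apply: eq_bigr => i _.
by congr (g _ _ - g _ _); lia.
Qed.

(* Telescoping also along rows leaves only boundary terms. *)
Lemma pair_energy_boundary (g : int -> int -> int) (s : seq nat) : sorted geq s ->
  pair_energy g s = \sum_(i < size s)
    (column_boundary g s i.+1%:Z (nth 0%N s i)%:Z - column_boundary g s i.+1%:Z 0).
Proof.
move=> srt.
have inner (n : nat * nat) :
    \sum_(m <- nodes s) mixed_diff g (m.1%:Z - n.1%:Z) (m.2%:Z - n.2%:Z)
    = column_boundary g s n.1 n.2 - column_boundary g s n.1 (n.2%:Z - 1).
  rewrite -!sum_nodes_vertical_diff // -sumrB; apply: eq_bigr => m _.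
  rewrite /mixed_diff; have -> : m.2%:Z - (n.2%:Z - 1) = m.2%:Z - n.2%:Z + 1 by ring.
  ring.
rewrite /pair_energy (eq_bigr _ (fun n _ => inner n)).
rewrite (sum_nodes (fun a b => column_boundary g s a b - column_boundary g s a (b%:Z - 1))).
apply: eq_bigr => i _.
have := telescope_sumr (fun j : nat => column_boundary g s i.+1%:Z j%:Z)
                       (leq0n (nth 0%N s i)).
rewrite big_mkord /= => <-; apply: eq_bigr => j _.
by congr (_ - column_boundary g s _ _); lia.
Qed.

Lemma pair_energy_ext (g1 g2 : int -> int -> int) (s : seq nat) :
  g1 =2 g2 -> pair_energy g1 s = pair_energy g2 s.
Proof.
move=> eq_g; apply: eq_bigr => n _; apply: eq_bigr => m _.
by rewrite /mixed_diff !eq_g.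
Qed.

Lemma pair_energyD (g1 g2 : int -> int -> int) (s : seq nat) :
  pair_energy (fun x y => g1 x y + g2 x y) s = pair_energy g1 s + pair_energy g2 s.
Proof.
rewrite /pair_energy -big_split; apply: eq_bigr => n _; rewrite -big_split.
by apply: eq_bigr => m _; rewrite /mixed_diff /=; ring.
Qed.

(* The reflection (x, y) |-> (-x-1, -y+1) commutes with mixed_diff up to
   swapping the two nodes, so it leaves the pair energy unchanged. *)
Lemma pair_energy_reflect (g : int -> int -> int) (s : seq nat) :
  pair_energy (fun x y => g (- x - 1) (- y + 1)) s = pair_energy g s.
Proof.
rewrite /pair_energy exchange_big; apply: eq_bigr => m _; apply: eq_bigr => n _.
rewrite /mixed_diff; set a1 := m.1%:Z; set b1 := n.1%:Z; set a2 := m.2%:Z; set b2 := n.2%:Z.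
have -> : - (a1 - b1) - 1 = b1 - a1 - 1 by ring.
have -> : - (a1 - b1 - 1) - 1 = b1 - a1 by ring.
have -> : - (a2 - b2) + 1 = b2 - a2 + 1 by ring.
have -> : - (a2 - b2 + 1) + 1 = b2 - a2 by ring.
ring.
Qed.

Definition ladder_rep (E Y : int) (x : int * int) : int * int :=
  (x.1 - (x.2 %/ Y)%Z * (Y - E), (x.2 %% Y)%Z).

Lemma in_ladderE (E Y : int) (rc x : int * int) : 0 < Y ->
  in_ladder E Y rc x = (ladder_rep E Y x == ladder_rep E Y rc).
Proof.
move=> Y0; case: rc => r1 r2; case: x => x1 x2; rewrite /in_ladder /ladder_rep /= xpair_eqE.
have [dv|ndv] := boolP (Y %| x2 - r2)%Z.
  move: (divzK dv); move: ((x2 - r2) %/ Y)%Z => q x2E.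
  have -> : x2 = q * Y + r2 by lia.
  rewrite divzMDl ?modzMDl; last by lia.
  by rewrite eqxx andbT /=; move: (r2 %/ Y)%Z => d; apply/eqP/eqP; lia.
apply/esym/negbTE/negP => /andP [_ /eqP same_row]; move/negP: ndv; apply.
apply/dvdzP; exists ((x2 %/ Y)%Z - (r2 %/ Y)%Z).
move: (divz_eq x2 Y) (divz_eq r2 Y) same_row.
by move: (x2 %/ Y)%Z (r2 %/ Y)%Z (x2 %% Y)%Z (r2 %% Y)%Z => q1 q2 m1 m2; lia.
Qed.

Lemma ladder_rep_idem (E Y : int) (x : int * int) : 0 < Y ->
  ladder_rep E Y (ladder_rep E Y x) = ladder_rep E Y x.
Proof.
move=> Y0; case: x => x1 x2; rewrite /ladder_rep /=.
have -> : ((x2 %% Y)%Z %/ Y)%Z = 0.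
  by apply: divz_small; rewrite modz_ge0 ?gtr0_norm ?ltz_pmod //; lia.
by rewrite modz_mod mul0r subr0.
Qed.

Lemma sum_by_fibres {T U : eqType} {l : seq T} {f : T -> U} {V : seq U} (psi : U -> int) :
  uniq V -> {subset map f l <= V} ->
  \sum_(x <- l) psi (f x) = \sum_(q <- V) psi q *+ count (fun x => f x == q) l.
Proof.
move=> uV; elim: l => [|x l IH] sub.
  by rewrite big_nil big1 // => q _; rewrite mulr0n.
rewrite big_cons IH; last by move=> w wl; apply: sub; rewrite inE wl orbT.
under [RHS]eq_bigr do rewrite /= mulrnDr.
rewrite big_split /=; congr (_ + _).
rewrite (bigD1_seq (f x)) //=; last by apply: sub; rewrite mem_head.
rewrite eqxx mulr1n big1 ?addr0 // => q /negbTE; rewrite eq_sym => ->.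
by rewrite mulr0n.
Qed.

(* The sum over the nodes of a ladder-invariant function only depends on the
   ladder class: it is a combination of the ladder counts. *)
Lemma ladder_invariant_sum {E Y : int} {s1 s2 : seq nat} (phi : int -> int -> int) :
  0 < Y -> (forall k x y, phi (x + k * (Y - E)) (y + k * Y) = phi x y) ->
  ladder_equiv E Y s1 s2 ->
  \sum_(n <- nodes s1) phi n.1%:Z n.2%:Z = \sum_(n <- nodes s2) phi n.1%:Z n.2%:Z.
Proof.
move=> Y0 phi_inv leqv.
pose f (n : nat * nat) := ladder_rep E Y (n.1%:Z, n.2%:Z).
pose psi (q : int * int) := phi q.1 q.2.
have phi_rep (n : nat * nat) : phi n.1%:Z n.2%:Z = psi (f n).
  rewrite /psi /f /ladder_rep /= -(phi_inv (- (n.2%:Z %/ Y)%Z) n.1%:Z n.2%:Z).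
  by congr (phi _ _); [ring | move: (divz_eq n.2%:Z Y); lia].
rewrite (eq_bigr _ (fun n _ => phi_rep n)) [RHS](eq_bigr _ (fun n _ => phi_rep n)).
pose V := undup (map f (nodes s1 ++ nodes s2)).
have sub1 : {subset map f (nodes s1) <= V}.
  by move=> q; rewrite mem_undup map_cat mem_cat => ->.
have sub2 : {subset map f (nodes s2) <= V}.
  by move=> q; rewrite mem_undup map_cat mem_cat => ->; rewrite orbT.
have uV : uniq V by apply: undup_uniq.
rewrite (sum_by_fibres psi uV sub1) (sum_by_fibres psi uV sub2).
apply: eq_big_seq => q; rewrite mem_undup => /mapP [n _ ->].
have count_ladder s :
    count (fun x => f x == f n) (nodes s) = ladder_count E Y (f n) s.
  by apply: eq_count => m /=; rewrite in_ladderE // ladder_rep_idem.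
by rewrite !count_ladder leqv.
Qed.

Lemma pair_energy_ladder_equiv (E Y : int) (g : int -> int -> int) (s1 s2 : seq nat) :
  0 < Y -> (forall k x y, g (x + k * (Y - E)) (y + k * Y) = g x y) ->
  ladder_equiv E Y s1 s2 -> pair_energy g s1 = pair_energy g s2.
Proof.
move=> Y0 g_inv leqv.
have diff_inv k x y x' y' : x' = x + k * (Y - E) -> y' = y + k * Y ->
    mixed_diff g x' y' = mixed_diff g x y.
  move=> -> ->; rewrite /mixed_diff.
  have shift u v : g (u + k * (Y - E)) (v + k * Y) = g u v by apply: g_inv.
  by rewrite -[in RHS](shift x) -(shift x (y + 1)) -(shift (x - 1) y)
       -(shift (x - 1) (y + 1)); congr (g _ _ - g _ _ - g _ _ + g _ _); ring.
rewrite /pair_energy.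
transitivity (\sum_(n <- nodes s1) \sum_(m <- nodes s2)
                mixed_diff g (m.1%:Z - n.1%:Z) (m.2%:Z - n.2%:Z)).
  apply: eq_bigr => n _.
  apply: (ladder_invariant_sum
    (fun x y => mixed_diff g (x - n.1%:Z) (y - n.2%:Z)) Y0 _ leqv).
  by move=> k x y; apply: (diff_inv k); ring.
apply: (ladder_invariant_sum (fun x y => \sum_(m <- nodes s2)
  mixed_diff g (m.1%:Z - x) (m.2%:Z - y)) Y0 _ leqv) => k x y.
by apply: eq_bigr => m _; apply: (diff_inv (- k)); ring.
Qed.

(* bad_cell e z a x y: with h = x - y + 1 and t = h / e, the point (x, y)
   encodes a hook of length h, leg x and arm -y that is (a/z)-bad:
   e divides h, z does not divide t, and z(-y) <= a t < z(-y) + z. *)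
Definition bad_cell (e z a : int) (x y : int) : bool :=
  [&& (e %| x - y + 1)%Z, ~~ (z %| ((x - y + 1) %/ e)%Z)%Z,
      z * (- y) <= a * ((x - y + 1) %/ e)%Z & a * ((x - y + 1) %/ e)%Z < z * (- y) + z].

Definition bad_cell_pos (e z a : int) (x y : int) : bool :=
  (0 < x - y + 1) && bad_cell e z a x y.

(* A step (a - e z, a) along an (ez, a)-ladder changes t by a multiple of z
   and shifts both bounds on a t by the same amount. *)
Lemma bad_cell_ladder_shift (e z a k x y : int) : 0 < e ->
  bad_cell e z a (x + k * (a - e * z)) (y + k * a) = bad_cell e z a x y.
Proof.
move=> e0; rewrite /bad_cell.
have -> : x + k * (a - e * z) - (y + k * a) + 1 = (- k * z) * e + (x - y + 1) by ring.
set h := x - y + 1; rewrite (rpredDl _ (dvdz_mull (- k * z) (dvdzz e))).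
have [dv|] := boolP (e %| h)%Z => //=.
rewrite divzMDl; last by lia.
set t := (h %/ e)%Z; rewrite (rpredDl _ (dvdz_mull (- k) (dvdzz z))).
congr (_ && _); apply/idP/idP; lia.
Qed.

(* Under (x, y) |-> (-x-1, -y+1), h and t change sign; when a and z are coprime
   and z does not divide t, a t is never a multiple of z, so the two strict
   bounds exchange roles. *)
Lemma bad_cell_reflect (e z a x y : int) : 0 < e -> coprimez a z ->
  bad_cell e z a (- x - 1) (- y + 1) = bad_cell e z a x y.
Proof.
move=> e0 co; rewrite /bad_cell.
have -> : - x - 1 - (- y + 1) + 1 = - (x - y + 1) by ring.
set h := x - y + 1; rewrite rpredN.
have [dv|] := boolP (e %| h)%Z => //=.
move: (divzK dv); set t := (h %/ e)%Z => hE.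
rewrite -hE -mulNr mulzK; last by lia.
rewrite rpredN; have [|ndz] := boolP (z %| t)%Z => //=.
have at_not_mult (c : int) : a * t != c * z.
  apply/eqP => atE; move: ndz; rewrite -(Gauss_dvdzr t (etrans (coprimez_sym z a) co)).
  by rewrite atE dvdz_mull ?dvdzz.
have n1 : a * t != z * - y by rewrite [z * _]mulrC at_not_mult.
have n2 : a * t != z * - y + z.
  by rewrite [z * _]mulrC -[X in _ + X]mul1r -mulrDl at_not_mult.
by apply/idP/idP; lia.
Qed.

(* A bad cell has h != 0, so it is either positive or the reflection of a
   positive one. *)
Lemma bad_cell_split (e z a x y : int) : 0 < e -> coprimez a z ->
  (bad_cell e z a x y)%:R =
  (bad_cell_pos e z a x y)%:R + (bad_cell_pos e z a (- x - 1) (- y + 1))%:R :> int.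
Proof.
move=> e0 co; rewrite /bad_cell_pos bad_cell_reflect //.
case bad: (bad_cell e z a x y); last by rewrite !andbF.
have h_neq0 : x - y + 1 != 0.
  by apply/eqP => h0; move: bad; rewrite /bad_cell h0 div0z !dvdz0.
have -> : (0 < - x - 1 - (- y + 1) + 1) = ~~ (0 < x - y + 1) by apply/idP/idP; lia.
by case: (0 < x - y + 1).
Qed.

(* Positive bad cells have a nonempty arm: t >= 1 and a >= z give
   z(-y) > a t - z >= z(t - 1), i.e. -y >= t ... *)
Lemma bad_cell_pos_right (e z a x y : int) :
  0 < e -> 0 < z -> z <= a -> 0 <= y -> bad_cell_pos e z a x y = false.
Proof.
move=> e0 z0 za y0; apply/negP; rewrite /bad_cell_pos /bad_cell => /and5P [h0 dv _ _ lt].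
move: (divzK dv) lt; set t := ((x - y + 1) %/ e)%Z => tE lt.
have t0 : 0 < t by nia.
nia.
Qed.

(* ... and a nonnegative leg: a <= (e-1) z gives -y <= (e-1) t, hence
   x = e t - 1 + y >= t - 1 >= 0. *)
Lemma bad_cell_pos_above (e z a x y : int) :
  0 < e -> 0 < z -> 0 <= a -> a <= (e - 1) * z -> x < 0 -> bad_cell_pos e z a x y = false.
Proof.
move=> e0 z0 a0 ae x0; apply/negP; rewrite /bad_cell_pos /bad_cell => /and5P [h0 dv _ le _].
move: (divzK dv) le; set t := ((x - y + 1) %/ e)%Z => tE le.
have t0 : 0 < t by nia.
nia.
Qed.

Lemma floor_mul_rat (y : rat) (t arm : nat) :
  (Posz arm == Num.floor (y * t%:R)) =
  (denq y * arm <= numq y * t) && (numq y * t < denq y * arm + denq y).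
Proof.
rewrite eq_sym floor_eq.
have z0 : 0 < (denq y)%:~R :> rat by rewrite ltr0z denq_gt0.
rewrite -(ler_pM2r z0) -(ltr_pM2r z0).
have -> : y * t%:R * (denq y)%:~R = (numq y * t%:Z)%:~R.
  by rewrite mulrAC -numqE intrM -pmulrn.
by rewrite -!intrM ler_int ltr_int; congr (_ && _); apply/idP/idP; lia.
Qed.

Lemma y_bad_cell (e : nat) (y : rat) (h arm leg : nat) :
  h = (arm + leg + 1)%N -> (0 < e)%N ->
  y_bad e y h arm = bad_cell_pos e%:Z (denq y) (numq y) leg%:Z (- arm%:Z).
Proof.
move=> hE e0; rewrite /y_bad /bad_cell_pos /bad_cell.
rewrite (_ : leg%:Z - - arm%:Z + 1 = h%:Z); last by rewrite hE; lia.
rewrite [(_ %| h%:Z)%Z]dvdzE divz_nat floor_mul_rat opprK.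
have [dv|] := boolP (e %| h)%N; last by rewrite /= andbF.
have -> : (0 < h %/ e)%N = (0 < h)%N.
  by rewrite divn_gt0 //; apply/idP/idP => ?; [lia | exact: dvdn_leq].
by rewrite ltz_nat; case: (0 < h)%N.
Qed.

Lemma count_sum_int (T : Type) (p : pred T) (l : seq T) :
  (count p l)%:R = \sum_(x <- l) (p x)%:R :> int.
Proof.
elim: l => [|x l IH]; first by rewrite big_nil.
by rewrite big_cons /= natrD IH.
Qed.

(* Throughout, y = a/z with z <= a <= (e-1) z, where a = numq y, z = denq y. *)
Section BadHookEnergy.
Variables (e : nat) (y : rat).
Hypothesis e_gt0 : (0 < e)%N.
Hypothesis z_le_a : denq y <= numq y.
Hypothesis a_le_ez : numq y <= (e%:Z - 1) * denq y.

Definition bad_weight (x w : int) : int := (bad_cell e%:Z (denq y) (numq y) x w)%:R.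
Definition pos_bad_weight (x w : int) : int :=
  (bad_cell_pos e%:Z (denq y) (numq y) x w)%:R.

Lemma bad_weight_ladder_shift (k x w : int) :
  bad_weight (x + k * (numq y - e%:Z * denq y)) (w + k * numq y) = bad_weight x w.
Proof. by rewrite /bad_weight bad_cell_ladder_shift // ltz_nat. Qed.

Let pos_right (x w : int) : 0 <= w -> pos_bad_weight x w = 0.
Proof. by move=> w0; rewrite /pos_bad_weight bad_cell_pos_right // ?denq_gt0; lia. Qed.

Let pos_above (x w : int) : x < 0 -> pos_bad_weight x w = 0.
Proof.
by move=> x0; rewrite /pos_bad_weight bad_cell_pos_above //; have := denq_gt0 y; lia.
Qed.

Lemma column_boundary_left (s : seq nat) (p : int) :
  column_boundary pos_bad_weight s p 0 = 0.
Proof. by rewrite /column_boundary big1 // => j _; rewrite !pos_right ?subrr //; lia. Qed.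

Lemma column_boundary_right (s : seq nat) (i : nat) : sorted geq s ->
  column_boundary pos_bad_weight s i.+1%:Z (nth 0%N s i)%:Z =
  \sum_(j < nth 0%N s i)
     (y_bad e y (hook_length s (i.+1, j.+1)) (arm_length s (i.+1, j.+1)))%:R.
Proof.
move=> srt; rewrite /column_boundary.
rewrite (big_ord_widen _ (fun j => (y_bad e y (hook_length s (i.+1, j.+1))
           (arm_length s (i.+1, j.+1)))%:R : int) (nth_le_sumn s i)) [RHS]big_mkcond.
apply: eq_bigr => j _; rewrite [X in _ - X]pos_above ?subr0; last by lia.
case: ifP => [in_row | /negbT]; last by rewrite -leqNgt => ?; rewrite pos_right //; lia.
have in_col := in_row; rewrite col_lt_conj // in in_col.
rewrite (@y_bad_cell e y _ _ (conj_part s j.+1 - i.+1)%N _ e_gt0); last first.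
  by rewrite /hook_length /arm_length /part /=; lia.
by rewrite /pos_bad_weight /arm_length /part /=; congr (bad_cell_pos _ _ _ _ _)%:R; lia.
Qed.

Lemma pair_energy_pos_bad (s : seq nat) : sorted geq s ->
  pair_energy pos_bad_weight s = (num_bad_hooks e y s)%:R.
Proof.
move=> srt; rewrite pair_energy_boundary // /num_bad_hooks count_sum_int.
rewrite (sum_nodes (fun a b => (y_bad e y (hook_length s (a, b)) (arm_length s (a, b)))%:R)).
by apply: eq_bigr => i _; rewrite column_boundary_left subr0 column_boundary_right.
Qed.

(* The full indicator counts every bad hook twice: once directly and once
   through the reflection. *)
Lemma pair_energy_bad (s : seq nat) : sorted geq s ->
  pair_energy bad_weight s = (num_bad_hooks e y s * 2)%N%:R.
Proof.
move=> srt.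
have co : coprimez (numq y) (denq y) by rewrite coprimezE coprime_num_den.
rewrite (pair_energy_ext _ (fun x w => pos_bad_weight x w
                                  + pos_bad_weight (- x - 1) (- w + 1)) s); last first.
  by move=> x w; rewrite /bad_weight bad_cell_split // ltz_nat.
rewrite pair_energyD (pair_energy_reflect pos_bad_weight) pair_energy_pos_bad //.
by rewrite natrM mulr_natr mulr2n.
Qed.

End BadHookEnergy.

Lemma denq_le_numq (y : rat) : 1 <= y -> denq y <= numq y.
Proof.
have z0 : 0 < (denq y)%:~R :> rat by rewrite ltr0z denq_gt0.
by rewrite -(ler_pM2r z0) mul1r -numqE ler_int.
Qed.

Lemma numq_le_mul_denq (y : rat) (n : nat) : y <= n%:R -> numq y <= n%:Z * denq y.
Proof.
have z0 : 0 < (denq y)%:~R :> rat by rewrite ltr0z denq_gt0.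
by rewrite -(ler_pM2r z0) -numqE pmulrn -intrM ler_int.
Qed.

Local Close Scope ring_scope.

Theorem mainTheorem2 (e : nat) (y : rat) (lam mu : seq nat) :
  3 <= e ->
  (1 <= y)%R -> (y <= (e.-1)%:R)%R ->
  (1 < denq y)%R ->
  is_partition lam -> is_partition mu ->
  (* (ez, yz)-ladder class; note yz = numq y since z = denq y *)
  ladder_equiv ((e%:Z) * denq y)%R (numq y) lam mu ->
  num_bad_hooks e y lam = num_bad_hooks e y mu.
Proof.
move=> e3 y_ge1 y_le _ /andP [lam_sorted _] /andP [mu_sorted _] same_class.
have e_gt0 : (0 < e)%N by apply: leq_trans e3.
have z_le_a := denq_le_numq _ y_ge1.
have a_le : (numq y <= (e%:Z - 1) * denq y)%R by have := numq_le_mul_denq _ _ y_le; lia.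
have a_gt0 : (0 < numq y)%R by have := denq_gt0 y; lia.
have := pair_energy_ladder_equiv _ _ _ _ _ a_gt0
          (bad_weight_ladder_shift e y e_gt0) same_class.
rewrite !pair_energy_bad // => /eqP; rewrite eqr_nat => /eqP; lia.
Qed.
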